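(* Let $D$ be a Newton diagram in $2$ variables whose support is exactly $K=\{(a,b)\in\mathbb N_0^2: a+b<d\}$ for some integer $d\ge1$. Then $SC(D)\ge\frac{d+1}{2}$.
   Context: For $m\in\mathbb Z^n$ write $|m|=m_1+\dots+m_n$; $e_1,\dots,e_n$ is the standard basis. A Newton diagram in $n$ variables is a function $D\colon\mathbb Z^n\to\{0,P,N\}$ ($P,N$ formal symbols) whose support $K=D^{-1}(\{P,N\})$ is a finite nonempty subset of $\mathbb N_0^n$. For $a\in\mathbb Z^n$ let $E(a)=\{a,a-e_1,\dots,a-e_n\}$; $E(a)$ is a node of $D$ if the image $D(E(a))$ equals $\{P\}$, $\{N\}$, $\{0,P\}$ or $\{0,N\}$. For $n=2$: a node $E(a)$ is an interior node if no point of $E(a)$ has $D$-value $0$, an edge node if exactly one does, a vertex node if exactly two do; a vertex node is a bottom node if its two $0$-points are $a-e_1$ and $a-e_2$. The weighted surface count is $SC(D)=(\#\text{interior nodes})+\tfrac12\big((\#\text{edge nodes})+(\#\text{vertex nodes})-(\#\text{bottom nodes})\big)$. *)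

From HB Require Import structures.
From mathcomp Require Import all_boot all_order all_algebra.
Set Implicit Arguments. Unset Strict Implicit. Unset Printing Implicit Defensive.
Import Order.TTheory GRing.Theory Num.Theory.

Inductive sym := Zr | Ps | Ng.

Definition sym_eqb (x y : sym) : bool :=
  match x, y with Zr, Zr | Ps, Ps | Ng, Ng => true | _, _ => false end.

(* A (two-variable) diagram is a map Z^2 -> {0,P,N}; finiteness/support
   conditions are hypotheses of the theorem. *)
Definition diagram := int * int -> sym.

Definition support_is_triangle (D : diagram) (d : nat) : Prop :=
  forall m : int * int,
    D m <> Zr <-> ((0 <= m.1)%R /\ (0 <= m.2)%R /\ (m.1 + m.2 < Posz d)%R).

Definition E (a : int * int) : seq (int * int) :=
  [:: a; ((a.1 - 1)%R, a.2); (a.1, (a.2 - 1)%R)].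

Definition img_has (D : diagram) (a : int * int) (v : sym) : bool :=
  has (fun p => sym_eqb (D p) v) (E a).

Definition is_node (D : diagram) (a : int * int) : bool :=
  let z := img_has D a Zr in
  let p := img_has D a Ps in
  let n := img_has D a Ng in
  [|| [&& ~~ z, p & ~~ n], [&& ~~ z, ~~ p & n],
      [&& z, p & ~~ n] | [&& z, ~~ p & n]].

Definition nzeros (D : diagram) (a : int * int) : nat :=
  count (fun p => sym_eqb (D p) Zr) (E a).

Definition is_interior (D : diagram) a := is_node D a && (nzeros D a == 0).
Definition is_edge (D : diagram) a := is_node D a && (nzeros D a == 1).
Definition is_vertex (D : diagram) a := is_node D a && (nzeros D a == 2).
Definition is_bottom (D : diagram) (a : int * int) :=
  [&& is_vertex D a, sym_eqb (D ((a.1 - 1)%R, a.2)) Zr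
    & sym_eqb (D (a.1, (a.2 - 1)%R)) Zr].

(* Number of a in the box [0,B]^2 satisfying P.  When the support of D lies in
   {m in N0^2 : m1 + m2 < B}, every node E(a) has a in [0,B]^2 (a node contains
   a point with nonzero value), so this counts all such nodes. *)
Definition count_box (P : int * int -> bool) (B : nat) : nat :=
  \sum_(i < B.+1) \sum_(j < B.+1) P (Posz i, Posz j).

Definition SC (D : diagram) (B : nat) : rat :=
  ((count_box (is_interior D) B)%:R
   + ((count_box (is_edge D) B)%:R + (count_box (is_vertex D) B)%:R
      - (count_box (is_bottom D) B)%:R) / 2%:R)%R.

From HB Require Import structures.
From mathcomp Require Import all_boot all_order all_algebra.
From mathcomp Require Import zify lra.
Import Order.TTheory GRing.Theory Num.Theory.

(* Charge each node E(a) to the point a.  Twice the node indicator minus the bottom-node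
   indicator of a depends only on which points of E(a) are zero and on the signs of the
   others, so 2 SC(D) is a sum of local weights over the points with a1 + a2 <= d.  Sweep
   the antidiagonals a1 + a2 = k: a sign change between two consecutive points of
   antidiagonal k + 1 is paid either by the weight of a point of that antidiagonal or by a
   sign change of antidiagonal k, and on the zero antidiagonal a1 + a2 = d the weight plus
   the sign changes of antidiagonal d - 1 is exactly d + 1.  Telescoping gives
   2 SC(D) >= d + 1. *)

Definition sign_of (x : sym) : option bool :=
  match x with Zr => None | Ps => Some true | Ng => Some false end.

Definition pattern_weight (x y z : option bool) : nat :=
  match x, y, z with
  | Some s, Some s1, Some s2 => 2 * ((s == s1) && (s == s2))
  | Some s, Some s1, None => s == s1
  | Some s, None, Some s2 => s == s2
  | None, Some s1, Some s2 => s1 == s2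
  | None, Some _, None | None, None, Some _ => 1
  | _, _, _ => 0
  end.

Lemma node_counts_pattern_weight (D : diagram) (a : int * int) :
  2 * is_interior D a + is_edge D a + is_vertex D a
  = pattern_weight (sign_of (D a)) (sign_of (D (a.1 - 1, a.2)%R))
                   (sign_of (D (a.1, a.2 - 1)%R)) + is_bottom D a.
Proof.
rewrite /is_bottom /is_interior /is_edge /is_vertex /is_node /nzeros /img_has /=.
by case: (D a); case: (D _); case: (D _).
Qed.

(* [t] is the sign pattern of a diagram supported on the triangle i + j < d. *)
Section Colouring.
Variables (t : nat -> nat -> bool) (d : nat).

Definition cell (i j : nat) : option bool := if i + j < d then Some (t i j) else None.

Definition weight (i j : nat) : nat :=
  pattern_weight (cell i j) (if i is i'.+1 then cell i' j else None)
                 (if j is j'.+1 then cell i j' else None).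

Definition antidiagonal_weight (k : nat) : nat := \sum_(0 <= i < k.+1) weight i (k - i).

Definition antidiagonal_changes (k : nat) : nat :=
  \sum_(0 <= i < k) (t i (k - i) != t i.+1 (k - i.+1)).

Lemma weight_outside i j : d < i + j -> weight i j = 0.
Proof. by rewrite /weight /cell; case: i j => [|i] [|j] h; rewrite !ifF //; lia. Qed.

Lemma weight_inner i j : i.+1 + j.+1 < d ->
  weight i.+1 j.+1 = 2 * ((t i.+1 j.+1 == t i j.+1) && (t i.+1 j.+1 == t i.+1 j)).
Proof. by move=> h; rewrite /weight /cell !ifT //; lia. Qed.

Lemma weight_left j : j.+1 < d -> weight 0 j.+1 = (t 0 j.+1 == t 0 j).
Proof. by move=> h; rewrite /weight /cell !ifT //; lia. Qed.

Lemma weight_bottom i : i.+1 < d -> weight i.+1 0 = (t i.+1 0 == t i 0).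
Proof. by move=> h; rewrite /weight /cell !ifT //; lia. Qed.

Lemma weight_hypotenuse i j : i.+1 + j.+1 = d ->
  weight i.+1 j.+1 = (t i j.+1 == t i.+1 j).
Proof. by move=> h; rewrite /weight /cell ifF ?ifT //; lia. Qed.

Lemma weight_corner_left n : n.+1 = d -> weight 0 n.+1 = 1.
Proof. by move=> h; rewrite /weight /cell ifF ?ifT //; lia. Qed.

Lemma weight_corner_bottom n : n.+1 = d -> weight n.+1 0 = 1.
Proof. by move=> h; rewrite /weight /cell ifF ?ifT //; lia. Qed.

Lemma antidiagonal_changes_step k : k.+1 < d ->
  antidiagonal_changes k.+1 <= antidiagonal_weight k.+1 + antidiagonal_changes k.
Proof.
move=> hk.
(* Both ends of a sign change of antidiagonal k + 1 are neighbours of one point of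
   antidiagonal k, and exactly one of them agrees with it. *)
pose above i := (t i (k.+1 - i) == t i (k - i) : nat).
pose right i := (t i.+1 (k - i) == t i (k - i) : nat).
have split_change : antidiagonal_changes k.+1 <= \sum_(0 <= i < k.+1) (above i + right i).
  rewrite /antidiagonal_changes !big_nat; apply: leq_sum => i _; rewrite subSS /above /right.
  by case: (t i (k.+1 - i)); case: (t i.+1 (k - i)); case: (t i (k - i)).
(* The two agreements at the point (i + 1, k - i) are paid by its weight if both hold,
   and by the sign change between its neighbours on antidiagonal k otherwise. *)
have inner : \sum_(0 <= i < k) (above i.+1 + right i) <=
             \sum_(0 <= i < k) weight i.+1 (k.+1 - i.+1) + antidiagonal_changes k.
  rewrite /antidiagonal_changes -big_split !big_nat; apply: leq_sum => i /andP [_ hi] /=.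
  have -> : k.+1 - i.+1 = (k - i.+1).+1 by lia.
  rewrite /above /right weight_inner; last lia.
  have -> : (k - i.+1).+1 = k - i by lia.
  by case: (t i.+1 (k - i)); case: (t i (k - i)); case: (t i.+1 (k - i.+1)).
have above0 : above 0 = weight 0 k.+1 by rewrite weight_left // /above !subn0.
have right_last : right k = weight k.+1 0 by rewrite weight_bottom // /right subnn.
move: split_change inner.
rewrite big_split /= big_nat_recl // [X in _ + X]big_nat_recr //= big_split /=.
rewrite /antidiagonal_weight big_nat_recl // big_nat_recr //= subn0 subnn -above0 -right_last.
lia.
Qed.

Lemma antidiagonal_last n : n.+1 = d ->
  antidiagonal_weight n.+1 + antidiagonal_changes n = n.+2.
Proof.
move=> hn.
rewrite /antidiagonal_weight big_nat_recl // big_nat_recr //= subn0 subnn.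
rewrite weight_corner_left // weight_corner_bottom //.
suff sum_middle : \sum_(0 <= i < n) weight i.+1 (n.+1 - i.+1) + antidiagonal_changes n = n
  by lia.
(* An inner point of the zero antidiagonal is an edge node iff its two neighbours agree. *)
rewrite /antidiagonal_changes -big_split /=.
rewrite (eq_big_nat _ _ (F2 := fun _ => 1)) ?sum_nat_const_nat ?muln1 ?subn0 //.
move=> i /andP [_ hi]; have -> : n.+1 - i.+1 = (n - i.+1).+1 by lia.
rewrite weight_hypotenuse; last lia.
have -> : (n - i.+1).+1 = n - i by lia.
by case: (t i (n - i)); case: (t i.+1 (n - i.+1)).
Qed.

Lemma antidiagonal_changes_le_sum k : k < d ->
  antidiagonal_changes k <= \sum_(0 <= k' < k.+1) antidiagonal_weight k'.
Proof.
elim: k => [|k IH] hk; first by rewrite /antidiagonal_changes big_geq.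
rewrite big_nat_recr //=.
by have := antidiagonal_changes_step _ hk; have := IH (ltnW hk); lia.
Qed.

Lemma sum_antidiagonal_weight_ge : 0 < d ->
  d.+1 <= \sum_(0 <= k < d.+1) antidiagonal_weight k.
Proof.
move=> hd; have [n hn] : exists n, n.+1 = d by exists d.-1; lia.
rewrite -hn big_nat_recr //=.
have := antidiagonal_changes_le_sum n; have := antidiagonal_last _ hn; lia.
Qed.

End Colouring.

Lemma sum_square_triangle (f : nat -> nat -> nat) n :
  (forall i j, n < i + j -> f i j = 0) ->
  \sum_(0 <= i < n.+1) \sum_(0 <= j < n.+1) f i j =
  \sum_(0 <= i < n.+1) \sum_(0 <= j < n.+1 - i) f i j.
Proof.
move=> f0; apply: eq_big_nat => i /andP [_ hi].
rewrite (big_cat_nat _ (n := n.+1 - i)) ?leq_subr //= -[RHS]addn0; congr (_ + _).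
by rewrite big_nat_cond big1 // => j /andP [/andP [hj _] _]; apply: f0; lia.
Qed.

Lemma sum_triangle_antidiagonals (f : nat -> nat -> nat) n :
  \sum_(0 <= i < n.+1) \sum_(0 <= j < n.+1 - i) f i j =
  \sum_(0 <= k < n.+1) \sum_(0 <= i < k.+1) f i (k - i).
Proof.
elim: n => [|n IH]; first by rewrite big_nat1 subn0 !big_nat1.
rewrite big_nat_recr //= [RHS]big_nat_recr //= -IH subSnn big_nat1.
rewrite [X in _ = _ + X]big_nat_recr //= subnn addnA -big_split /=; congr (_ + _).
apply: eq_big_nat => i /andP [_ hi].
by rewrite subSn ?(ltnW hi) // big_nat_recr.
Qed.

Definition positive (D : diagram) (i j : nat) : bool := sym_eqb (D (Posz i, Posz j)) Ps.

Section TriangleSupport.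
Variables (D : diagram) (d : nat).
Hypothesis hK : support_is_triangle D d.

Lemma diagram_zero (m : int * int) :
  ~ ((0 <= m.1)%R /\ (0 <= m.2)%R /\ (m.1 + m.2 < Posz d)%R) -> D m = Zr.
Proof. by move=> out; case Dm: (D m) => //; case: out; apply/hK; rewrite Dm. Qed.

Lemma sign_of_diagram i j : sign_of (D (Posz i, Posz j)) = cell (positive D) d i j.
Proof.
rewrite /cell /positive; case: ltnP => h.
  have /= := (hK (Posz i, Posz j)).2; rewrite -PoszD ltz_nat.
  by case: (D _) => // /(_ (conj (le0z_nat i) (conj (le0z_nat j) h))).
by rewrite diagram_zero //= -PoszD ltz_nat ltnNge h => -[_ []].
Qed.

Lemma sign_of_diagram_left i j :
  sign_of (D (Posz i - 1, Posz j)%R) = if i is i'.+1 then cell (positive D) d i' j else None.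
Proof.
case: i => [|i]; last by rewrite intS addrC addKr sign_of_diagram.
by rewrite diagram_zero // => -[].
Qed.

Lemma sign_of_diagram_down i j :
  sign_of (D (Posz i, Posz j - 1)%R) = if j is j'.+1 then cell (positive D) d i j' else None.
Proof.
case: j => [|j]; last by rewrite intS addrC addKr sign_of_diagram.
by rewrite diagram_zero // => -[_ []].
Qed.

Lemma node_counts_weight i j (a := (Posz i, Posz j)) :
  2 * is_interior D a + is_edge D a + is_vertex D a
  = weight (positive D) d i j + is_bottom D a.
Proof.
rewrite node_counts_pattern_weight /=.
by rewrite sign_of_diagram sign_of_diagram_left sign_of_diagram_down.
Qed.

End TriangleSupport.

Theorem mainTheorem8 (D : diagram) (d : nat) (hd : (1 <= d)%N)
  (hK : support_is_triangle D d) :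
  (((d.+1)%:R / 2%:R : rat) <= SC D d)%R.
Proof.
pose total_weight := \sum_(0 <= i < d.+1) \sum_(0 <= j < d.+1) weight (positive D) d i j.
have counts : 2 * count_box (is_interior D) d + count_box (is_edge D) d
    + count_box (is_vertex D) d = total_weight + count_box (is_bottom D) d.
  rewrite /total_weight /count_box big_mkord big_distrr -!big_split; apply: eq_bigr => i _ /=.
  rewrite big_mkord big_distrr -!big_split; apply: eq_bigr => j _ /=.
  exact: node_counts_weight.
have weight_ge : d.+1 <= total_weight.
  rewrite /total_weight sum_square_triangle; last by move=> i j; apply: weight_outside.
  by rewrite sum_triangle_antidiagonals; apply: sum_antidiagonal_weight_ge.
have := congr1 (fun n => n%:R : rat) counts; rewrite /= !natrD.
have : ((d.+1)%:R <= total_weight%:R :> rat)%R by rewrite ler_nat.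
rewrite /SC; lra.
Qed.
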